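(* Let $\sigma$ be a permutation of $\mathbb{N}$ and let $\tilde\sigma$ be its extension to $\mathbb{Z}$ by the identity, i.e. $\tilde\sigma(k)=\sigma(k)$ for $k\in\mathbb{N}$ and $\tilde\sigma(k)=k$ otherwise. Then $$\mathrm{RW}(\tilde\sigma)=\mathrm{BST}(\sigma)\cup\bigcup_{k<0}\{1^k\}=\mathrm{BST}(\sigma)\cup\bigcup_{k\in\mathbb{N}}\{\Upsilon^k\},$$ and consequently $\mathrm{RW}(\tilde\sigma)\cap\mathbb{T}=\mathrm{BST}(\sigma)$.
   Context: $\mathbb{N}=\{1,2,\dots\}$. $\mathbb{T}$ is the set of finite words over $\{0,1\}$ with empty word $\varnothing$; $aS=\{aw:w\in S\}$. For a finite sequence $x=(x_1,\dots,x_m)$ of distinct numbers, $\mathrm{BST}(x)=\emptyset$ if $m=0$, else $\{\varnothing\}\cup0\,\mathrm{BST}(x_-)\cup1\,\mathrm{BST}(x_+)$, $x_-$ (resp. $x_+$) the subsequence of entries smaller (resp. larger) than $x_1$ in original order; for infinite $x$, $\mathrm{BST}(x)=\bigcup_m\mathrm{BST}(x_1,\dots,x_m)$; $\mathrm{BST}(\sigma)=\mathrm{BST}(\sigma(1),\sigma(2),\dots)$. Extended words: add a letter $\Upsilon$ with $1^k=1\cdots1$ ($k$ letters) for $k>0$, $1^0=\varnothing$, $1^k=\Upsilon^{|k|}$ for $k<0$. Redwood tree: an injective $\sigma:\mathbb{Z}\to\mathbb{Z}$ is admissible if $|\{i\in\mathbb{N}:\sigma(i)\notin\mathbb{N}\}|+|\{i\in\mathbb{Z}\setminus\mathbb{N}:\sigma(i)\in\mathbb{N}\}|<\infty$;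 a record index is $r$ with $\sigma(r)>\sigma(k)$ for all $k<r$; the standard record representation is the increasing enumeration $(r_k)_{k\in\mathbb{Z}}$ of record indices with $\sigma(r_0)\le0<\sigma(r_1)$; $\sigma[k]$ is the sequence of values $\sigma(i)$ with $\sigma(r_k)<\sigma(i)<\sigma(r_{k+1})$ in increasing order of $i$; $\mathrm{RW}(\sigma)=\bigcup_{k\in\mathbb{Z}}(\{1^k\}\cup1^k0\,\mathrm{BST}(\sigma[k]))$. *)

From mathcomp Require Import all_boot all_order all_algebra.
Set Implicit Arguments. Unset Strict Implicit. Unset Printing Implicit Defensive.
Import Order.TTheory GRing.Theory Num.Theory.
Local Open Scope ring_scope.

Inductive letter := Zero | One | Ups.

Definition word := seq letter.

Fixpoint inT (w : word) : Prop :=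
  match w with [::] => True | Ups :: _ => False | _ :: w' => inT w' end.

(* 1^k for k : int ; 1^k = Upsilon^|k| for k < 0 (Negz n = -(n+1)). *)
Definition pow1 (k : int) : word :=
  match k with Posz n => nseq n One | Negz n => nseq n.+1 Ups end.

(* Membership in BST(x) for a finite sequence x, by unfolding
   BST(x) = {} if x empty, else {empty} u 0 BST(x_-) u 1 BST(x_+). *)
Fixpoint inBST (x : seq int) (w : word) {struct w} : Prop :=
  match x with
  | [::] => False
  | a :: t =>
    match w with
    | [::] => True
    | Zero :: w' => inBST [seq y <- t | y < a] w'
    | One :: w' => inBST [seq y <- t | a < y] w'
    | Ups :: _ => False
    end
  end.

(* sigma is a permutation of N = {1,2,...} (values at 0 are irrelevant). *)
Definition is_permN (s : nat -> nat) : Prop :=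
  [/\ (forall n, (0 < n)%N -> (0 < s n)%N),
      (forall m n, (0 < m)%N -> (0 < n)%N -> s m = s n -> m = n) &
      (forall m, (0 < m)%N -> exists2 n, (0 < n)%N & s n = m)].

Definition inBSTperm (s : nat -> nat) (w : word) : Prop :=
  exists m : nat, inBST [seq (s i)%:Z | i <- iota 1 m] w.

Definition ext (s : nat -> nat) (k : int) : int :=
  if 0 < k then (s (absz k))%:Z else k.

Definition is_record (s : int -> int) (r : int) : Prop :=
  forall k, k < r -> s k < s r.

Definition std_rec_rep (s : int -> int) (r : int -> int) : Prop :=
  [/\ (forall k, r k < r (k + 1)),
      (forall i, is_record s i <-> exists k, r k = i) &
      s (r 0) <= 0 < s (r 1)].

Definition block (s : int -> int) (a b : int) (bl : seq int) : Prop :=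
  exists idx : seq int,
    [/\ sorted <%R idx,
        (forall i, i \in idx <-> (a < s i) && (s i < b)) &
        bl = map s idx].

(* RW(sigma) = U_{k in Z} ({1^k} u 1^k 0 BST(sigma[k])). *)
Definition inRW (s : int -> int) (w : word) : Prop :=
  exists r, std_rec_rep s r /\
    exists k : int,
      w = pow1 k \/
      exists bl w', [/\ block s (s (r k)) (s (r (k + 1))) bl, inBST bl w' &
                        w = pow1 k ++ Zero :: w'].

From mathcomp Require Import all_boot all_order all_algebra zify.
Import Order.TTheory GRing.Theory Num.Theory.
Set Implicit Arguments. Unset Strict Implicit. Unset Printing Implicit Defensive.
Local Open Scope ring_scope.

(* The records of the extension are all non-positive integers together with
   the left-to-right maxima 1 = r_1 < r_2 < ... of sigma, so its standard
   record representation is forced: r_k = k for k <= 0.  For k < 0 the block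
   sigma[k] lies strictly between k and k + 1, hence is empty, and only the
   word 1^k = Upsilon^|k| remains.  For k >= 0 the right spine of BST(sigma)
   carries the record values sigma(r_1) < sigma(r_2) < ..., and the left
   subtree hanging below 1^k is the BST of the values strictly between
   sigma(r_k) and sigma(r_(k+1)) in order of appearance, i.e. of sigma[k].
   Since sigma is a bijection each block is finite, so it is already complete
   in a long enough prefix of sigma. *)

Lemma homo_lt_succz (f : int -> int) :
  (forall k, f k < f (k + 1)) -> {homo f : x y / x < y}.
Proof.
move=> f_succ x y xy.
have -> : y = x + (absz (y - x - 1)%R).+1%:Z by lia.
elim: (absz _) => [|n IHn]; first exact: f_succ.
by apply: lt_trans IHn _; rewrite -[_.+2]addn1 PoszD addrA.
Qed.

Section StrictlyIncreasing.
Variables f g : int -> int.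
Hypotheses (f_incr : {homo f : x y / x < y}) (g_incr : {homo g : x y / x < y}).
Hypothesis range_gf : forall k, exists i, g k = f i.

Lemma incr_succ_le k : f k = g k -> f (k + 1) <= g (k + 1).
Proof.
move=> fgk; have [i gi] := range_gf (k + 1).
have ki : k < i by rewrite -(leW_mono (le_mono f_incr)) fgk -gi g_incr // ltrDl.
by rewrite gi (le_mono f_incr) lezD1.
Qed.

Lemma incr_pred_ge k : f k = g k -> g (k - 1) <= f (k - 1).
Proof.
move=> fgk; have [i gi] := range_gf (k - 1).
have ik : i < k by rewrite -(leW_mono (le_mono f_incr)) fgk -gi g_incr // gtrDl oppr_lt0.
by rewrite gi (le_mono f_incr) lerBrDr lezD1.
Qed.

End StrictlyIncreasing.

Lemma incr_range_eq (f g : int -> int) :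
  {homo f : x y / x < y} -> {homo g : x y / x < y} ->
  (forall i, (exists k, f k = i) <-> (exists k, g k = i)) -> f 0 = g 0 -> f =1 g.
Proof.
move=> f_incr g_incr range_fg fg0.
have range_gf k : exists i, g k = f i.
  have [i <-] : exists i, f i = g k by apply/range_fg; exists k.
  by exists i.
have range_fg' k : exists i, f k = g i.
  have [i <-] : exists i, g i = f k by apply/range_fg; exists k.
  by exists i.
elim/int_rect => [//|n fgn|n fgn]; apply/le_anti.
- have -> : n.+1%:Z = n + 1 by rewrite -addn1 PoszD.
  rewrite (incr_succ_le f_incr g_incr range_gf fgn).
  by rewrite (incr_succ_le g_incr f_incr range_fg' (esym fgn)).
- have -> : - (n.+1)%:Z = - n%:Z - 1 by rewrite -addn1 PoszD opprD.
  rewrite (incr_pred_ge f_incr g_incr range_gf fgn).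
  by rewrite (incr_pred_ge g_incr f_incr range_fg' (esym fgn)).
Qed.

Lemma block_uniq (f : int -> int) a b bl bl' :
  block f a b bl -> block f a b bl' -> bl = bl'.
Proof.
case=> [idx [idx_sorted idx_mem ->]] [idx' [idx'_sorted idx'_mem ->]].
congr map; apply: lt_sorted_eq => // i.
by apply/idP/idP => [/idx_mem/idx'_mem | /idx'_mem/idx_mem].
Qed.

Lemma block_succ_nil (f : int -> int) a bl : block f a (a + 1) bl -> bl = [::].
Proof.
case=> [[|i idx] [_ idx_mem ->]] //.
by have /andP[] := (idx_mem i).1 (mem_head _ _); lia.
Qed.

Lemma block_iota (f : int -> int) a b (N m : nat) :
  (forall i, a < f i < b -> 0 < i <= N) -> (N <= m)%N ->
  block f a b [seq y <- [seq f i%:Z | i <- iota 1 m] | a < y < b].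
Proof.
move=> in_range Nm; exists [seq i <- [seq i%:Z | i <- iota 1 m] | a < f i < b]; split.
- apply: sorted_filter; first exact: lt_trans.
  by apply: (homo_sorted (e := ltn)) (iota_ltn_sorted 1 m) => x y; rewrite ltz_nat.
- move=> i; rewrite mem_filter; split => [/andP[] // | fi]; rewrite fi /=.
  have /andP[i0 iN] := in_range i fi.
  by apply/mapP; exists (absz i); [rewrite mem_iota | ]; lia.
- by rewrite !filter_map -map_comp.
Qed.

Lemma inBST_cat (x y : seq int) w : inBST x w -> inBST (x ++ y) w.
Proof.
elim: w x y => [|l w IHw] [|a x] y //=.
by case: l => //; rewrite filter_cat; apply: IHw.
Qed.

Lemma inBST_inT (x : seq int) w : inBST x w -> inT w.
Proof. by elim: w x => [|[] w IHw] [|a x] //= /IHw. Qed.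

Definition spine (B : nat -> word -> Prop) (w : word) : Prop :=
  exists j, w = nseq j One \/ exists2 w', w = nseq j One ++ Zero :: w' & B j w'.

Section PermutationRecords.
Variable s : nat -> nat.
Hypothesis hs : is_permN s.

Lemma ext_pos (i : nat) : (0 < i)%N -> ext s i = (s i)%:Z.
Proof. by rewrite /ext ltz_nat => ->. Qed.

Lemma ext_le0 k : k <= 0 -> ext s k = k.
Proof. by rewrite /ext leNgt => /negPf ->. Qed.

Lemma ext_nat_ge0 (i : nat) : 0 <= ext s i.
Proof. by rewrite /ext; case: ifP. Qed.

Lemma ext_gt0 k : (0 < ext s k) = (0 < k).
Proof.
have [hpos _ _] := hs.
case: (lerP k 0) => [k0 | k0]; first by rewrite ext_le0 // ltNge k0.
by rewrite /ext k0 ltz_nat hpos //; lia.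
Qed.

Lemma exists_above (v : int) : exists i : nat, v < ext s i.
Proof.
have [_ _ hsurj] := hs; have [i i0 si] := hsurj (absz v).+1 isT.
by exists i; rewrite ext_pos // si; lia.
Qed.

Definition first_above (v : int) : nat := ex_minn (exists_above v).

Lemma first_aboveP v : 0 <= v ->
  v < ext s (first_above v) /\ forall k : int, k < first_above v -> ext s k <= v.
Proof.
rewrite /first_above => v0; case: ex_minnP => i vi i_min; split=> // -[j | j] ji.
  by rewrite leNgt; apply/negP => /i_min; lia.
by rewrite ext_le0 //; lia.
Qed.

(* [rec_pos n] is the record index r_n of the paper, with [rec_pos 0 = 0]. *)
Fixpoint rec_pos (n : nat) : nat :=
  if n is n'.+1 then first_above (ext s (rec_pos n')) else 0.

Lemma ext_recpos_lt n : ext s (rec_pos n) < ext s (rec_pos n.+1).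
Proof. exact: (first_aboveP (ext_nat_ge0 _)).1. Qed.

Lemma recpos_gap n (k : int) : k < rec_pos n.+1 -> ext s k <= ext s (rec_pos n).
Proof. exact: (first_aboveP (ext_nat_ge0 _)).2. Qed.

Lemma recpos_max n (k : int) : k <= rec_pos n -> ext s k <= ext s (rec_pos n).
Proof.
case: n => [|n] kn; first by rewrite ext_le0.
rewrite le_eqVlt in kn; case/predU1P: kn => [-> // | /recpos_gap kn].
exact: le_trans kn (ltW (ext_recpos_lt n)).
Qed.

Lemma recpos_lt n : (rec_pos n < rec_pos n.+1)%N.
Proof.
rewrite ltnNge -lez_nat; apply/negP => /recpos_max.
by rewrite leNgt ext_recpos_lt.
Qed.

Lemma recpos_cover (p : nat) : exists n, (rec_pos n <= p < rec_pos n.+1)%N.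
Proof.
elim: p => [|p [n /andP[np pn]]]; first by exists 0%N; exact: recpos_lt.
case: (ltnP p.+1 (rec_pos n.+1)) => pn'; first by exists n; rewrite pn' andbT; lia.
by exists n.+1; have := recpos_lt n.+1; lia.
Qed.

Definition rec_rep (k : int) : int := if k is Posz n then (rec_pos n)%:Z else k.

Lemma recidx_le0 k : k <= 0 -> rec_rep k = k.
Proof. by case: k => [[|n]|n]. Qed.

Lemma recidx_incr : {homo rec_rep : x y / x < y}.
Proof.
apply: homo_lt_succz => -[n | n]; first by rewrite -PoszD addn1 ltz_nat recpos_lt.
by rewrite !recidx_le0 ?ltrDl //; lia.
Qed.

Lemma is_record_le0 k : k <= 0 -> is_record (ext s) k.
Proof. by move=> k0 j jk; rewrite !ext_le0 //; lia. Qed.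

Lemma is_record_recpos n : is_record (ext s) (rec_pos n).
Proof.
case: n => [|n]; first exact: is_record_le0.
by move=> j /recpos_gap jn; apply: le_lt_trans jn (ext_recpos_lt n).
Qed.

Lemma is_recordP i : is_record (ext s) i <-> exists k, rec_rep k = i.
Proof.
split=> [i_rec | [[n | n] <-]]; last 2 first.
- exact: is_record_recpos.
- exact: is_record_le0.
case: (lerP i 0) => [i0 | ]; first by exists i; rewrite recidx_le0.
case: i i_rec => [p | //] p_rec p0; have [n /andP[np pn]] := recpos_cover p.
exists n; congr Posz; apply/eqP; rewrite eqn_leq np /= leqNgt; apply/negP => np'.
have := p_rec (rec_pos n); rewrite ltz_nat => /(_ np').
by rewrite ltNge recpos_gap // ltz_nat.
Qed.

Lemma std_rec_rep_recidx : std_rec_rep (ext s) rec_rep.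
Proof.
split; [by move=> k; apply: recidx_incr; rewrite ltrDl | exact: is_recordP |].
apply/andP; split; [by rewrite ext_le0 | exact: ext_recpos_lt 0].
Qed.

Lemma std_rec_rep_uniq r : std_rec_rep (ext s) r -> r =1 rec_rep.
Proof.
case=> r_succ r_rec /andP[r0_le r1_gt].
have r_incr := homo_lt_succz r_succ; have r_le := le_mono r_incr.
apply: incr_range_eq r_incr recidx_incr _ _ => [i | ]; first by rewrite -r_rec is_recordP.
have [j rj] := (r_rec 0).1 (is_record_le0 (lexx 0)).
have : r 0 <= r j by rewrite rj leNgt -ext_gt0 -leNgt.
have : r j < r 1 by rewrite rj -ext_gt0.
rewrite r_le (leW_mono r_le) => j1 j0.
have j_eq0 : j = 0 by lia.
by move: rj; rewrite j_eq0 => ->.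
Qed.

Lemma recidx_nat (n : nat) : rec_rep n = rec_pos n.
Proof. by []. Qed.

Definition prefix m : seq int := [seq (s i)%:Z | i <- iota 1 m].

(* The keys of the subtree of BST(prefix m) rooted at the node 1^n. *)
Definition above n m := [seq y <- prefix m | ext s (rec_pos n) < y].

Definition between n m :=
  [seq y <- prefix m | ext s (rec_pos n) < y < ext s (rec_pos n.+1)].

Lemma prefix_ext m : prefix m = [seq ext s i%:Z | i <- iota 1 m].
Proof. by apply/eq_in_map => i; rewrite mem_iota => /andP[i0 _]; rewrite ext_pos. Qed.

Lemma above0 m : above 0 m = prefix m.
Proof.
apply/all_filterP/allP => y; rewrite prefix_ext => /mapP[i].
by rewrite mem_iota => /andP[i0 _] ->; rewrite (ext_le0 (lexx 0)) ext_gt0 ltz_nat.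
Qed.

Lemma above_succ n m :
  above n.+1 m = [seq y <- above n m | ext s (rec_pos n.+1) < y].
Proof.
rewrite /above -filter_predI; apply: eq_filter => y /=.
by apply/idP/andP => [lt | [] //]; split=> //; apply: lt_trans (ext_recpos_lt n) lt.
Qed.

Lemma between_above n m :
  between n m = [seq y <- above n m | y < ext s (rec_pos n.+1)].
Proof. by rewrite /between /above -filter_predI; apply: eq_filter => y /=; rewrite andbC. Qed.

Lemma above_nil n m : (m < rec_pos n.+1)%N -> above n m = [::].
Proof.
move=> m_lt; rewrite /above prefix_ext filter_map (@eq_in_filter _ _ pred0) ?filter_pred0 //.
by move=> i; rewrite mem_iota => /andP[_ im] /=; rewrite ltNge recpos_gap // ltz_nat; lia.
Qed.

Lemma above_cons n m : (rec_pos n.+1 <= m)%N ->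
  exists t, above n m = ext s (rec_pos n.+1) :: t.
Proof.
set p := rec_pos n.+1 => pm; have p0 : (0 < p)%N by have := recpos_lt n; lia.
have := above_nil (m := p.-1); rewrite /above !prefix_ext => /(_ _) front_nil.
have -> : m = (p.-1 + (m - p).+1)%N by lia.
rewrite iotaD map_cat filter_cat front_nil; last by lia.
by rewrite add1n prednK //= ext_recpos_lt; eexists.
Qed.

Lemma inBST_above n m w : inBST (above n m) w <->
  match w with
  | [::] => (rec_pos n.+1 <= m)%N
  | Zero :: w' => inBST (between n m) w'
  | One :: w' => inBST (above n.+1 m) w'
  | Ups :: _ => False
  end.
Proof.
rewrite above_succ between_above; case: (ltnP m (rec_pos n.+1)) => [mp | pm].
  by rewrite above_nil //; case: w => [|[] []].
by have [t ->] := above_cons pm; case: w => [|[] w] //=; rewrite ltxx.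
Qed.

Lemma inBST_above_nseq n m j w :
  inBST (above n m) (nseq j One ++ w) <-> inBST (above (n + j) m) w.
Proof.
elim: j n => [|j IHj] n; first by rewrite addn0.
by rewrite inBST_above /= IHj addSnnS.
Qed.

Lemma inBST_above_spine n m w :
  inBST (above n m) w -> spine (fun j => inBST (between (n + j) m)) w.
Proof.
elim: w n => [|[] w IHw] n; rewrite inBST_above // => bw.
- by exists 0%N; left.
- by exists 0%N; right; exists w; rewrite ?addn0.
- have [j [-> | [w' -> bw']]] := IHw _ bw; exists j.+1; first by left.
  by right; exists w'; rewrite // -addSnnS.
Qed.

Lemma ext_bounded (b : nat) :
  exists N : nat, forall i, 0 < ext s i < b%:Z -> 0 < i <= N%:Z.
Proof.
have [_ s_inj s_surj] := hs.
elim: b => [|b [N hN]]; first by exists 0%N => i; lia.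
have [-> | b_pos] := posnP b; first by exists N => i; lia.
have [p p0 sp] := s_surj b b_pos.
exists (maxn N p) => -[j | j] /andP[j_pos j_lt]; last by move: j_pos; rewrite ext_gt0.
have j0 : (0 < j)%N by rewrite -ltz_nat -ext_gt0.
have [j_ltb | j_geb] := ltrP (ext s j) b; first by have := hN j; rewrite j_pos j_ltb; lia.
rewrite ext_pos // in j_lt j_geb.
have -> : j = p by apply: s_inj; lia.
lia.
Qed.

Lemma block_between n : exists N, forall m, (N <= m)%N -> forall bl,
  block (ext s) (ext s (rec_pos n)) (ext s (rec_pos n.+1)) bl <-> bl = between n m.
Proof.
have p0 : (0 < rec_pos n.+1)%N by have := recpos_lt n; lia.
have [N hN] := ext_bounded (s (rec_pos n.+1)).
exists N => m Nm bl.
have blk : block (ext s) (ext s (rec_pos n)) (ext s (rec_pos n.+1)) (between n m).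
  rewrite /between prefix_ext; apply: block_iota Nm => i /andP[ai ib]; apply: hN.
  by rewrite -(ext_pos p0) ib andbT; apply: le_lt_trans (ext_nat_ge0 _) ai.
by split => [/block_uniq/(_ blk) | ->].
Qed.

Lemma between_catr n m M : (m <= M)%N -> exists t, between n M = between n m ++ t.
Proof.
by move=> mM; rewrite /between /prefix -(subnKC mM) iotaD map_cat filter_cat; eexists.
Qed.

Definition inBST_block j w :=
  exists2 bl, block (ext s) (ext s (rec_pos j)) (ext s (rec_pos j.+1)) bl & inBST bl w.

Lemma inBST_between_block n w : (exists m, inBST (between n m) w) <-> inBST_block n w.
Proof.
have [N hN] := block_between n.
split=> [[m bw] | [bl /(hN N (leqnn N)) -> bw]]; last by exists N.
have [t et] := between_catr n (leq_maxr N m).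
exists (between n (maxn N m)); first exact/(hN _ (leq_maxl _ _)).
by rewrite et; apply: inBST_cat.
Qed.

Lemma inBSTperm_spine w : inBSTperm s w <-> spine inBST_block w.
Proof.
split=> [[m] | [j [-> | [w' -> /inBST_between_block[m bw']]]]].
- rewrite -/(prefix m) -above0 => /inBST_above_spine[j [-> | [w' -> bw']]].
    by exists j; left.
  by exists j; right; exists w' => //; apply/inBST_between_block; exists m.
- exists (rec_pos j.+1); rewrite -/(prefix _) -above0 -[nseq j One]cats0.
  by rewrite inBST_above_nseq add0n; apply/inBST_above.
- by exists m; rewrite -/(prefix m) -above0 inBST_above_nseq add0n; apply/inBST_above.
Qed.

Lemma inRW_spine w :
  inRW (ext s) w <-> spine inBST_block w \/ exists2 k, k < 0 & w = pow1 k.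
Proof.
split=> [[r [/std_rec_rep_uniq r_eq [k]]] | ]; last first.
  case=> [[j [-> | [w' -> [bl b_bl bw]]]] | [k k0 ->]];
    exists rec_rep; split; try exact: std_rec_rep_recidx.
  - by exists j; left.
  - by exists j; right; exists bl, w'; rewrite -PoszD addn1 !recidx_nat.
  - by exists k; left.
rewrite !r_eq; case: k => [j | j] [-> | [bl [w' [b_bl bw ->]]]].
- by left; exists j; left.
- rewrite -PoszD addn1 !recidx_nat in b_bl.
  by left; exists j; right; exists w' => //; exists bl.
- by right; exists (Negz j).
- rewrite !recidx_le0 ?ext_le0 in b_bl; try lia.
  by move: bw; rewrite (block_succ_nil b_bl); case: w'.
Qed.

End PermutationRecords.

Lemma pow1_neg w : (exists2 k : int, k < 0 & w = pow1 k) <->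
  (exists2 k : nat, (0 < k)%N & w = nseq k Ups).
Proof.
split=> [[[n | n] // _ ->] | [[|n] // _ ->]]; first by exists n.+1.
by exists (Negz n).
Qed.

Lemma pow1_neg_notT k : k < 0 -> ~ inT (pow1 k).
Proof. by case: k => [n | n] k0 //; lia. Qed.

Unset Implicit Arguments.

Theorem lemma2p4 (s : nat -> nat) (hs : is_permN s) :
  [/\ (forall w, inRW (ext s) w <->
                 inBSTperm s w \/ exists2 k : int, k < 0 & w = pow1 k),
      (forall w, inRW (ext s) w <->
                 inBSTperm s w \/ exists2 k : nat, (0 < k)%N & w = nseq k Ups) &
      (forall w, inRW (ext s) w /\ inT w <-> inBSTperm s w)].
Proof.
have RW w : inRW (ext s) w <-> inBSTperm s w \/ exists2 k : int, k < 0 & w = pow1 k.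
  by rewrite (inRW_spine hs) (inBSTperm_spine hs).
split=> w; first exact: RW.
  by rewrite RW pow1_neg.
rewrite RW; split=> [[[bw | [k k0 ->]] wT] // | bw]; first by case: (pow1_neg_notT k0 wT).
by split; [left | case: bw => m /inBST_inT].
Qed.
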